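(* Let $\mathcal{S}$ be a set with $|\mathcal{S}|=m\ge 2$, let $l\ge 4$, and fix $j$ distinct reduced words of length $g(l)<l/4$ in the free group $\langle\mathcal{S}\rangle$. Then the probability that a uniformly random cyclically reduced word of length $l$ in $\langle\mathcal{S}\rangle$ contains none of these $j$ words as a subword is at most \[ \exp\left(\frac{2}{(2m-1)^{(l/2)-1}}-\frac{lj}{9g(l)(2m-1)^{g(l)}}\right). \] *)

From Stdlib Require Import Reals.
From mathcomp Require Import all_boot.
Set Implicit Arguments. Unset Strict Implicit. Unset Printing Implicit Defensive.

(* Letters of the free group on the finite generating set S:
   (s, false) is the generator s, (s, true) is its inverse s^-1. *)
Definition letter (S : finType) : finType := (S * bool)%type.

Definition letter_inv (S : finType) (a : letter S) : letter S := (a.1, ~~ a.2).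

Definition reduced (S : finType) (w : seq (letter S)) : bool :=
  sorted (fun a b => b != letter_inv a) w.

Definition cyc_reduced (S : finType) (w : seq (letter S)) : bool :=
  reduced w && (if w is x :: _ then last x w != letter_inv x else true).

Definition cyc_words (S : finType) (l : nat) : {set l.-tuple (letter S)} :=
  [set t : l.-tuple (letter S) | cyc_reduced t].

Definition avoiding_words (S : finType) (l : nat) (ws : seq (seq (letter S)))
  : {set l.-tuple (letter S)} :=
  [set t : l.-tuple (letter S) | cyc_reduced t && all (fun u => ~~ infix u t) ws].

Definition prob_avoid (S : finType) (l : nat) (ws : seq (seq (letter S))) : R :=
  Rdiv (INR #|avoiding_words l ws|) (INR #|cyc_words S l|).

From Stdlib Require Import Reals Lra.
From mathcomp Require Import all_boot zify.
Set Implicit Arguments. Unset Strict Implicit. Unset Printing Implicit Defensive.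

(* Cut the cyclic word into N = (l-1) %/ (k+1) windows of k+2 letters, consecutive
   windows sharing a border letter, so that their interiors are disjoint blocks of
   k letters.  Once every letter outside one window is fixed, there are at most
   (2m-1)^(k+2) cyclically reduced completions, and at least j (2m-2)^2 of them put
   a forbidden word in the interior, because each border letter only has to avoid
   two inverses.  Conditioning window after window, the proportion of words with no
   forbidden window interior is at most
   (1 - j (2m-2)^2 / (2m-1)^(k+2))^N <= exp (- N j (2m-2)^2 / (2m-1)^(k+2)),
   and N >= l / (4k) gives the stated exponent; its first term is mere slack. *)

Lemma card_set_fibers (X Y : finType) (f : X -> Y) (A : {set X}) :
  #|A| = \sum_(y : Y) #|[set x in A | f x == y]|.
Proof.
rewrite -sum1_card (partition_big f predT) //=; apply: eq_bigr => y _.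
by rewrite -sum1_card; apply: eq_bigl => x; rewrite inE.
Qed.

Lemma leq_card_in_set (X Y : finType) (f : X -> Y) (A : {set X}) (B : {set Y}) :
  {in A &, injective f} -> {in A, forall x, f x \in B} -> #|A| <= #|B|.
Proof.
move=> f_inj fAB; rewrite -(card_in_imset f_inj); apply: subset_leq_card.
by apply/subsetP => _ /imsetP [x xA ->]; apply: fAB.
Qed.

Lemma cards_sepID (X : finType) (A : {set X}) (P : pred X) :
  #|[set x in A | P x]| + #|[set x in A | ~~ P x]| = #|A|.
Proof.
rewrite -(cardsID [set x | P x] A); congr (_ + _); apply: eq_card => x;
by rewrite !inE; case: (x \in A); case: (P x).
Qed.

Lemma sum_card_fibers_le (X : finType) (Y : eqType) (f : X -> Y) (A : {set X})
    (ys : seq Y) :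
  uniq ys -> \sum_(y <- ys) #|[set x in A | f x == y]| <= #|[set x in A | f x \in ys]|.
Proof.
elim: ys => [|y ys IH] /=; first by rewrite big_nil.
move=> /andP [y_notin_ys ys_uniq]; rewrite big_cons.
rewrite -(cards_sepID [set x in A | f x \in y :: ys] (fun x => f x == y)).
apply: leq_add.
  apply: eq_leq; apply: eq_card => x; rewrite !inE.
  by case: (x \in A); case: (f x == y); rewrite ?andbF.
apply: leq_trans (IH ys_uniq) _; apply: eq_leq; apply: eq_card => x; rewrite !inE.
case: (x \in A) => //=; case: (f x =P y) => [->|] //=; first by rewrite (negbTE y_notin_ys).
by rewrite andbT.
Qed.

Lemma card_neq2 (T : finType) (a b : T) : #|T| - 2 <= #|[set g | (g != a) && (g != b)]|.
Proof.
have := cardsC [set a; b]; rewrite cards2.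
have -> : [set g | (g != a) && (g != b)] = ~: [set a; b].
  by apply/setP => g; rewrite !inE negb_or.
by case: (a != b) => /=; lia.
Qed.

Lemma forall_ordSr (P : nat -> bool) r :
  [forall i : 'I_r.+1, P i] = [forall i : 'I_r, P i] && P r.
Proof.
apply/forallP/andP => [h | [/forallP h Pr] i].
  by split; [apply/forallP => i; exact: (h (widen_ord (leqnSn r) i)) | exact: (h ord_max)].
have [ir | ri] := ltnP i r; first exact: (h (Ordinal ir)).
by have -> : (i : nat) = r by have := ltn_ord i; lia.
Qed.


Section ReducedWords.
Variable S : finType.
Implicit Types (a b c : letter S) (z : seq (letter S)).

Lemma letter_invK : involutive (@letter_inv S).
Proof. by case=> a b; rewrite /letter_inv /= negbK. Qed.

Lemma card_letter : #|letter S| = #|S| * 2.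
Proof. by rewrite /letter card_prod card_bool. Qed.

Lemma neq_letter_invC a b : (a != letter_inv b) = (b != letter_inv a).
Proof. by apply/idP/idP; apply: contra => /eqP ->; rewrite letter_invK. Qed.

Definition head_neq c z := if z is a :: _ then a != c else true.

Lemma reduced_cons a z : reduced (a :: z) = head_neq (letter_inv a) z && reduced z.
Proof. by case: z. Qed.

Lemma card_reduced_head_neq n c :
  #|[set z : n.-tuple (letter S) | reduced z && head_neq c z]| <= #|letter S|.-1 ^ n.
Proof.
elim: n c => [|n IH] c.
  by apply: leq_trans (max_card _) _; rewrite card_tuple.
rewrite (card_set_fibers (fun z : n.+1.-tuple (letter S) => thead z)).
apply: (@leq_trans (\sum_(a : letter S | a != c) #|letter S|.-1 ^ n)); last first.
  by rewrite sum_nat_const cardC1 expnS.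
rewrite (bigID (fun a => a != c)) /= -[X in _ <= X]addn0; apply: leq_add.
  apply: leq_sum => a ac; apply: leq_trans (IH (letter_inv a)).
  apply: (leq_card_in_set (f := fun z : n.+1.-tuple (letter S) => [tuple of behead z])).
    move=> z1 z2; rewrite !inE => /andP [_ /eqP h1] /andP [_ /eqP h2] /(congr1 val) /= hb.
    by rewrite (tuple_eta z1) (tuple_eta z2) h1 h2; apply: val_inj => /=; rewrite hb.
  case/tupleP=> a' z'; rewrite !inE /= theadE => /andP [/andP [red _] /eqP <-].
  by move: red; rewrite -[path _ _ _]/(reduced (a' :: z')) reduced_cons andbC.
rewrite leqn0; apply/eqP/big1 => a /negbNE /eqP ->; apply/eqP; rewrite cards_eq0.
apply/eqP/setP => z; rewrite !inE; apply/negbTE/negP => /andP [/andP [_ h] /eqP e].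
by move: h; rewrite (tuple_eta z) /= e eqxx.
Qed.

End ReducedWords.

Definition tuple_of_fun (T : Type) n (F : nat -> T) : n.-tuple T :=
  @Tuple n T (mkseq F n) (introT eqP (size_mkseq F n)).

Lemma nth_tuple_of_fun (T : Type) (x0 : T) n F i :
  i < n -> nth x0 (tuple_of_fun n F) i = F i.
Proof. by move=> lt_i_n; rewrite /= nth_mkseq. Qed.

Section Windows.
Variables (S : finType) (x0 : letter S).
Implicit Types (s k l : nat) (u z : seq (letter S)).

Definition cyc_reduced_nth l (w : seq (letter S)) :=
  forall i, i < l -> nth x0 w (i.+1 %% l) != letter_inv (nth x0 w i).

Lemma cyc_reducedP l (w : l.-tuple (letter S)) :
  0 < l -> cyc_reduced w <-> cyc_reduced_nth l w.
Proof.
case: w => [[|a s] /= /eqP sz] l_gt0; first by rewrite -sz in l_gt0.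
subst l; rewrite /cyc_reduced /= -[path _ _ _]/(reduced (a :: s)).
split.
- move=> /andP [/(sortedP x0) red last_ok] i lt_i.
  have [lt_iS | ge_iS] := ltnP i.+1 (size s).+1; first by rewrite modn_small //; apply: red.
  have -> : i = size s by apply/anti_leq/andP; split.
  by rewrite modnn /= neq_letter_invC -(last_nth x0 a s).
- move=> h; apply/andP; split.
    apply/(sortedP x0) => i lt_i; have := h i; rewrite modn_small //; apply; exact: ltnW.
  by have := h (size s) (ltnSn _); rewrite modnn /= neq_letter_invC -(last_nth x0 a s).
Qed.

Definition in_window s k p := s <= p < s + k.+2.

Definition window_interior s k (t : seq (letter S)) := take k (drop s.+1 t).

Definition outside_window l s k (t : l.-tuple (letter S)) :
  {ffun 'I_l -> option (letter S)} :=
  [ffun i : 'I_l => if in_window s k i then None else Some (tnth t i)].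

Lemma outside_windowP l s k (t w : l.-tuple (letter S)) :
  reflect (forall i, i < l -> ~~ in_window s k i -> nth x0 t i = nth x0 w i)
          (outside_window s k t == outside_window s k w).
Proof.
apply: (iffP eqP) => [/ffunP eq_tw i lt_il out_i | eq_tw].
  by have := eq_tw (Ordinal lt_il); rewrite !ffunE /= (negbTE out_i) !(tnth_nth x0) => [[]].
apply/ffunP => i; rewrite !ffunE; case: ifP => // /negbT out_i.
by rewrite !(tnth_nth x0) eq_tw.
Qed.

Definition window_fiber l s k (w : l.-tuple (letter S)) :=
  [set t : l.-tuple (letter S) |
     cyc_reduced t && (outside_window s k t == outside_window s k w)].

Definition cyc_pred l s := if s is 0 then l.-1 else s.-1.

Lemma cyc_predP l s k : s + k.+2 <= l -> k.+3 <= l ->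
  [/\ cyc_pred l s < l, ~~ in_window s k (cyc_pred l s) & (cyc_pred l s).+1 %% l = s].
Proof.
rewrite /cyc_pred /in_window; case: s => [|s] win_l k_l.
  by split; [lia | lia | rewrite prednK ?modnn //; lia].
by split; [lia | lia | rewrite modn_small //; lia].
Qed.

Lemma card_window_fiber_le l s k (w : l.-tuple (letter S)) :
  s + k.+2 <= l -> k.+3 <= l -> #|window_fiber s k w| <= #|letter S|.-1 ^ k.+2.
Proof.
move=> win_l k_l; have [pred_l pred_out pred_succ] := cyc_predP win_l k_l.
have l_gt0 : 0 < l by lia.
apply: leq_trans (card_reduced_head_neq k.+2 (letter_inv (nth x0 w (cyc_pred l s)))).
apply: (leq_card_in_set
  (f := fun t : l.-tuple (letter S) => tuple_of_fun k.+2 (fun j => nth x0 t (s + j)))).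
  move=> t1 t2; rewrite !inE => /andP [_ /outside_windowP eq1] /andP [_ /outside_windowP eq2] e.
  apply: val_inj; apply: (eq_from_nth (x0 := x0)); first by rewrite !size_tuple.
  move=> i; rewrite size_tuple => lt_il.
  have [win_i | ] := boolP (in_window s k i); last by move=> out_i; rewrite eq1 // eq2.
  have := congr1 (fun z : k.+2.-tuple _ => nth x0 z (i - s)) e.
  move: win_i; rewrite /in_window => /andP [s_i i_end].
  by rewrite !nth_tuple_of_fun ?subnKC //; lia.
move=> t; rewrite !inE => /andP [/(cyc_reducedP _ l_gt0) t_cr /outside_windowP eq_tw].
apply/andP; split.
  apply/(sortedP x0) => i; rewrite size_tuple => lt_i.
  rewrite !nth_tuple_of_fun; try lia.
  by have := t_cr (s + i); rewrite modn_small -?addnS; [apply; lia | lia].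
by rewrite /= addn0 -(eq_tw _ pred_l pred_out); have := t_cr _ pred_l; rewrite pred_succ.
Qed.

Definition fill_window l s k (w : l.-tuple (letter S)) z : l.-tuple (letter S) :=
  tuple_of_fun l (fun i => if in_window s k i then nth x0 z (i - s) else nth x0 w i).

Lemma fill_window_cyc_reduced l s k (w : l.-tuple (letter S)) z :
  s + k.+2 <= l -> k.+3 <= l -> cyc_reduced_nth l w -> size z = k.+2 -> reduced z ->
  nth x0 z 0 != letter_inv (nth x0 w (cyc_pred l s)) ->
  nth x0 w ((s + k.+2) %% l) != letter_inv (nth x0 z k.+1) ->
  cyc_reduced_nth l (fill_window s k w z).
Proof.
move=> win_l k_l w_cr size_z /(sortedP x0) z_red z_first z_last i lt_il.
have [pred_l pred_out pred_succ] := cyc_predP win_l k_l.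
rewrite /fill_window !nth_tuple_of_fun //; last by apply: ltn_pmod; lia.
have [lt_iS | ge_iS] := ltnP i.+1 l.
- rewrite modn_small //.
  case: (boolP (in_window s k i)) => win_i; case: (boolP (in_window s k i.+1)) => win_iS.
  + move: win_i win_iS; rewrite /in_window => /andP [s_i _] /andP [_ iS_end].
    by have := z_red (i - s); rewrite size_z -subSn //; apply; lia.
  + move: win_i win_iS; rewrite /in_window => /andP [s_i i_end]; rewrite negb_and -!ltnNge.
    move=> iS_out; have -> : i = s + k.+1 by lia.
    by move: z_last; rewrite addKn modn_small ?addnS //; lia.
  + move: win_i win_iS; rewrite /in_window negb_and -!ltnNge => i_out /andP [s_iS iS_end].
    have ei : i.+1 = s by lia.
    by rewrite ei subnn; move: z_first; rewrite -ei.
  + by have := w_cr i lt_il; rewrite modn_small.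
- have ei : i.+1 = l by lia.
  rewrite ei modnn.
  case: (boolP (in_window s k i)) => win_i.
  + have end_l : s + k.+2 = l by move: win_i; rewrite /in_window; lia.
    have out0 : ~~ in_window s k 0 by rewrite /in_window; lia.
    rewrite (negbTE out0); move: z_last; rewrite end_l modnn.
    by rewrite (_ : i - s = k.+1) //; lia.
  + case: (boolP (in_window s k 0)) => win0.
    * have s0 : s = 0 by move: win0; rewrite /in_window; lia.
      by move: z_first; rewrite s0 subn0 /cyc_pred (_ : l.-1 = i) //; lia.
    * by have := w_cr i lt_il; rewrite ei modnn.
Qed.

Lemma window_interior_fill l s k (w : l.-tuple (letter S)) g1 u g2 :
  s + k.+2 <= l -> size u = k ->
  window_interior s k (fill_window s k w (g1 :: u ++ [:: g2])) = u.
Proof.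
move=> win_l size_u; apply: (eq_from_nth (x0 := x0)).
  by rewrite size_takel ?size_u // size_drop size_tuple; lia.
move=> j; rewrite size_takel ?size_drop ?size_tuple; last lia.
move=> lt_jk; rewrite nth_take // nth_drop /fill_window nth_tuple_of_fun; last lia.
have -> : in_window s k (s.+1 + j) by rewrite /in_window; lia.
by rewrite (_ : s.+1 + j - s = j.+1) /= ?nth_cat ?size_u ?lt_jk //; lia.
Qed.

Lemma reduced_cons_rcons g1 u g2 : 0 < size u -> reduced u ->
  g1 != letter_inv (nth x0 u 0) -> g2 != letter_inv (nth x0 u (size u).-1) ->
  reduced (g1 :: u ++ [:: g2]).
Proof.
case: u => [|a u] // _ u_red g1_ok g2_ok.
rewrite /reduced /= cat_path /= -[path _ a u]/(reduced (a :: u)) u_red andbT.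
by rewrite neq_letter_invC g1_ok (last_nth x0).
Qed.

Lemma card_window_fiber_forbidden_ge l s k (ws : seq (seq (letter S)))
    (w : l.-tuple (letter S)) :
  0 < k -> s + k.+2 <= l -> k.+3 <= l -> cyc_reduced w -> uniq ws ->
  all (fun u => reduced u && (size u == k)) ws ->
  size ws * (#|letter S| - 2) ^ 2 <=
  #|[set t in window_fiber s k w | window_interior s k t \in ws]|.
Proof.
move=> k_gt0 win_l k_l w_red ws_uniq ws_ok.
have l_gt0 : 0 < l by lia.
have w_cr := iffLR (cyc_reducedP w l_gt0) w_red.
apply: leq_trans (sum_card_fibers_le
  (fun t : l.-tuple (letter S) => window_interior s k t) (window_fiber s k w) ws_uniq).
have -> : size ws * (#|letter S| - 2) ^ 2 = \sum_(u <- ws) (#|letter S| - 2) ^ 2.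
  by rewrite big_const_seq count_predT iter_addn_0 mulnC.
rewrite !big_seq; apply: leq_sum => u u_ws; have /andP [u_red /eqP size_u] := allP ws_ok u u_ws.
(* The two border letters of the window each have to avoid two inverses. *)
set G1 := [set g | (g != letter_inv (nth x0 w (cyc_pred l s))) &&
                   (g != letter_inv (nth x0 u 0))].
set G2 := [set g | (g != letter_inv (nth x0 u k.-1)) &&
                   (g != letter_inv (nth x0 w ((s + k.+2) %% l)))].
apply: (@leq_trans (#|G1| * #|G2|)); first by rewrite -mulnn leq_mul // card_neq2.
rewrite -cardsX.
apply: (leq_card_in_set (f := fun g : letter S * letter S =>
                         fill_window s k w (g.1 :: u ++ [:: g.2]))).
  move=> [g1 g2] [g1' g2'] _ _ /= e.
  have := congr1 (fun t : l.-tuple _ => nth x0 t s) e.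
  have := congr1 (fun t : l.-tuple _ => nth x0 t (s + k.+1)) e.
  rewrite /fill_window !nth_tuple_of_fun; try lia.
  have -> : in_window s k s by rewrite /in_window; lia.
  have -> : in_window s k (s + k.+1) by rewrite /in_window; lia.
  by rewrite subnn addKn /= !nth_cat size_u ltnn subnn /= => -> ->.
move=> [g1 g2]; rewrite !inE /= => /andP [/andP [g1_w g1_u] /andP [g2_u g2_w]].
rewrite window_interior_fill // eqxx !andbT; apply/andP; split.
  apply/(cyc_reducedP _ l_gt0); apply: fill_window_cyc_reduced => //.
  - by rewrite /= size_cat size_u addn1.
  - by apply: reduced_cons_rcons; rewrite ?size_u // -size_u.
  - by rewrite /= nth_cat size_u ltnn subnn /= neq_letter_invC.
apply/outside_windowP => i lt_il out_i.
by rewrite /fill_window nth_tuple_of_fun // (negbTE out_i).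
Qed.

End Windows.

Lemma leq_ratio_sub F B D b : b <= B -> B <= F -> F <= D -> (F - B) * D <= F * (D - b).
Proof.
move=> b_B B_F F_D; rewrite mulnBl mulnBr; apply: leq_sub2l.
by rewrite [B * D]mulnC leq_mul.
Qed.

Section AvoidingWindows.
Variables (S : finType) (x0 : letter S) (k : nat) (ws : seq (seq (letter S))).
Hypotheses (k_gt0 : 0 < k) (ws_uniq : uniq ws)
           (ws_ok : all (fun u => reduced u && (size u == k)) ws).

Definition avoiding_windows l r : {set l.-tuple (letter S)} :=
  [set t : l.-tuple (letter S) | cyc_reduced t &&
     [forall i : 'I_r, window_interior (i * k.+1) k t \notin ws]].

Lemma avoiding_windows0 l : avoiding_windows l 0 = cyc_words S l.
Proof.
apply/setP => t; rewrite !inE.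
have -> : [forall i : 'I_0, window_interior (i * k.+1) k t \notin ws] by apply/forallP => [[]].
by rewrite andbT.
Qed.

Lemma avoiding_words_sub_windows l r : avoiding_words l ws \subset avoiding_windows l r.
Proof.
apply/subsetP => t; rewrite !inE => /andP [-> t_avoids] /=.
apply/forallP => i; apply/negP => /(allP t_avoids) /negP; apply.
exact: infix_trans (infix_take _ _) (infix_drop _ _).
Qed.

Lemma window_interior_eq_outside l r (t w : l.-tuple (letter S)) i : i < r ->
  outside_window (r * k.+1) k t == outside_window (r * k.+1) k w ->
  window_interior (i * k.+1) k t = window_interior (i * k.+1) k w.
Proof.
move=> lt_ir /(outside_windowP x0) eq_tw.
apply: (eq_from_nth (x0 := x0)); first by rewrite !size_take_min !size_drop !size_tuple.
move=> j; rewrite size_take_min size_drop size_tuple leq_min => /andP [lt_jk lt_jl].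
rewrite !nth_take // !nth_drop; apply: eq_tw; first lia.
have : i.+1 * k.+1 <= r * k.+1 by rewrite leq_mul2r lt_ir orbT.
by rewrite /in_window mulSn; lia.
Qed.

Lemma mem_avoiding_windows_fiber l r (t w : l.-tuple (letter S)) :
  w \in avoiding_windows l r ->
  outside_window (r * k.+1) k t == outside_window (r * k.+1) k w ->
  (t \in avoiding_windows l r = cyc_reduced t) /\
  (t \in avoiding_windows l r.+1 =
     cyc_reduced t && (window_interior (r * k.+1) k t \notin ws)).
Proof.
rewrite !inE (forall_ordSr (fun i => window_interior (i * k.+1) k t \notin ws)).
move=> /andP [_ /forallP w_avoids] eq_tw.
suff -> : [forall i : 'I_r, window_interior (i * k.+1) k t \notin ws] by rewrite andbT.
apply/forallP => i.
by rewrite (window_interior_eq_outside (ltn_ord i) eq_tw); apply: w_avoids.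
Qed.

Lemma card_avoiding_windowsS l r : k.+3 <= l -> r.+1 * k.+1 < l ->
  #|avoiding_windows l r.+1| * #|letter S|.-1 ^ k.+2 <=
  #|avoiding_windows l r| * (#|letter S|.-1 ^ k.+2 - size ws * (#|letter S| - 2) ^ 2).
Proof.
move=> k_l r_l; set s := r * k.+1.
have win_l : s + k.+2 <= l by move: r_l; rewrite /s mulSn; lia.
rewrite (card_set_fibers (outside_window s k) (avoiding_windows l r.+1)).
rewrite (card_set_fibers (outside_window s k) (avoiding_windows l r)) !big_distrl /=.
apply: leq_sum => y _.
have [fib0 | [w]] := set_0Vmem [set t in avoiding_windows l r | outside_window s k t == y].
  rewrite fib0 cards0 mul0n leqn0 muln_eq0 cards_eq0; apply/orP; left.
  apply/eqP/setP => t; rewrite in_set0 inE; apply/negbTE/negP => /andP [t_avoids /eqP t_y].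
  have : t \in [set t in avoiding_windows l r | outside_window s k t == y].
    move: t_avoids; rewrite !inE t_y eqxx andbT.
    by rewrite (forall_ordSr (fun i => window_interior (i * k.+1) k t \notin ws)) andbA => /andP [].
  by rewrite fib0 inE.
rewrite inE => /andP [w_avoids /eqP <-].
have fiber_r : [set t in avoiding_windows l r | outside_window s k t == outside_window s k w]
    = window_fiber s k w.
  apply/setP => t; rewrite in_set [t \in window_fiber _ _ _]inE.
  have [eq_tw | ] := boolP (_ == _); rewrite ?andbF ?andbT //.
  by have [-> _] := mem_avoiding_windows_fiber w_avoids eq_tw.
have fiber_rS :
    [set t in avoiding_windows l r.+1 | outside_window s k t == outside_window s k w] =
    [set t in window_fiber s k w | window_interior s k t \notin ws].
  apply/setP => t; rewrite in_set [t \in [set _ in window_fiber _ _ _ | _]]in_set.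
  rewrite [t \in window_fiber _ _ _]inE.
  have [eq_tw | ] := boolP (_ == _); rewrite ?andbF ?andbT //.
  by have [_ ->] := mem_avoiding_windows_fiber w_avoids eq_tw; rewrite -andbA andbC.
rewrite fiber_r fiber_rS.
have split_fiber := cards_sepID (window_fiber s k w) (fun t => window_interior s k t \in ws).
have w_red : cyc_reduced w by move: w_avoids; rewrite inE => /andP [].
have -> : #|[set t in window_fiber s k w | window_interior s k t \notin ws]| =
          #|window_fiber s k w| - #|[set t in window_fiber s k w | window_interior s k t \in ws]|.
  by rewrite -split_fiber addKn.
apply: leq_ratio_sub.
- exact: card_window_fiber_forbidden_ge.
- by rewrite -split_fiber leq_addr.
- exact: card_window_fiber_le.
Qed.

Lemma card_avoiding_windows_le l r : k.+3 <= l -> r <= l.-1 %/ k.+1 ->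
  #|avoiding_windows l r| * (#|letter S|.-1 ^ k.+2) ^ r <=
  #|cyc_words S l| * (#|letter S|.-1 ^ k.+2 - size ws * (#|letter S| - 2) ^ 2) ^ r.
Proof.
move=> k_l; elim: r => [|r IH] r_N; first by rewrite !expn0 !muln1 avoiding_windows0.
have r_l : r.+1 * k.+1 < l.
  have := leq_divM l.-1 k.+1.
  have : r.+1 * k.+1 <= l.-1 %/ k.+1 * k.+1 by rewrite leq_mul2r r_N orbT.
  lia.
rewrite expnS mulnA; apply: leq_trans (leq_mul (card_avoiding_windowsS k_l r_l) (leqnn _)) _.
by rewrite mulnAC [_ ^ r.+1]expnSr mulnA leq_mul2r IH ?orbT //; lia.
Qed.

End AvoidingWindows.

Lemma window_count_ge l k : 0 < k -> 4 * k < l -> l <= 4 * k * (l.-1 %/ k.+1).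
Proof.
move=> k_gt0 k_l; have := divn_eq l.-1 k.+1; have : l.-1 %% k.+1 < k.+1 by apply: ltn_pmod.
set N := l.-1 %/ k.+1; set rem := l.-1 %% k.+1 => rem_lt l_eq.
by rewrite -(leq_pmul2r (ltn0Sn k)); nia.
Qed.

(* The constant 9 absorbs 4 (T - 1)^2 <= 9 (T - 2)^2 (true for T >= 4) and the
   loss l <= 4 k N in the number N of windows. *)
Lemma leq_window_exponent l k j T : 0 < k -> 4 * k < l -> 4 <= T ->
  l * j * T.-1 ^ k.+2 <= l.-1 %/ k.+1 * (j * (T - 2) ^ 2) * (9 * k * T.-1 ^ k).
Proof.
move=> k_gt0 k_l T_ge4; have l_N := window_count_ge k_gt0 k_l.
set N := l.-1 %/ k.+1 in l_N *; set M := T.-1.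
have M2 : 4 * (M * M) <= 9 * ((T - 2) * (T - 2)).
  have M1 : 2 * M <= 3 * (T - 2) by rewrite /M; lia.
  by have := leq_mul M1 M1; rewrite mulnACA [(3 * _) * _]mulnACA.
have lM2 : l * (M * M) <= 9 * k * N * ((T - 2) * (T - 2)).
  by have := leq_mul l_N (leqnn (M * M)); have := leq_mul (leqnn (k * N)) M2; nia.
have := leq_mul lM2 (leqnn (j * M ^ k)).
by rewrite (expnSr M k.+1) (expnSr M k) -mulnn; set P := M ^ k; nia.
Qed.

Local Open Scope R_scope.

Lemma INR_muln m n : INR (m * n)%N = INR m * INR n.
Proof. by rewrite -multE mult_INR. Qed.

Lemma INR_expn m n : INR (m ^ n)%N = INR m ^ n.
Proof. by elim: n => [|n IH]; rewrite ?expn0 // expnS INR_muln IH. Qed.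

Lemma INR_subn m n : (n <= m)%N -> INR (m - n)%N = INR m - INR n.
Proof. by move=> /leP n_m; rewrite -minusE minus_INR. Qed.

Lemma Rdiv_le_div_cross a c p q : 0 < c -> 0 < q -> a * q <= c * p -> a / c <= p / q.
Proof.
move=> c_gt0 q_gt0 cross; apply: (Rmult_le_reg_r (c * q)); first exact: Rmult_lt_0_compat.
have -> : a / c * (c * q) = a * q by field; lra.
by have -> : p / q * (c * q) = c * p by field; lra.
Qed.

Lemma exp_mulINR x n : exp x ^ n = exp (INR n * x).
Proof.
elim: n => [|n IH]; first by rewrite /= Rmult_0_l exp_0.
by rewrite S_INR /= IH -exp_plus; congr exp; ring.
Qed.

Lemma exp_le_exp x y : x <= y -> exp x <= exp y.
Proof. by case/Rle_lt_or_eq_dec => [/exp_increasing/Rlt_le | ->]; [| apply: Rle_refl]. Qed.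

Lemma ratio_le_exp (a c D b N : nat) : (0 < D)%N -> (0 < N)%N -> (a <= c)%N ->
  (a * D ^ N <= c * (D - b) ^ N)%N ->
  INR a / INR c <= exp (- (INR N * INR b / INR D)).
Proof.
move=> D_gt0 N_gt0 a_c decay.
have exp_ge0 := Rlt_le _ _ (exp_pos (- (INR N * INR b / INR D))).
have [c0 | c_gt0] := posnP c.
  by rewrite (_ : a = 0%N) ?INR_0 ?Rdiv_0_l //; lia.
have [b_D | D_b] := leqP b D; last first.
  have a0 : a = 0%N.
    move: decay; rewrite (_ : (D - b = 0)%N); last lia.
    by rewrite exp0n // muln0 leqn0 muln_eq0 expn_eq0 => /orP [/eqP | /andP [/eqP D0 _]]; lia.
  by rewrite a0 INR_0 Rdiv_0_l.
have Dr : 0 < INR D by apply/lt_0_INR/ltP.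
set x := INR b / INR D.
have x_01 : 0 <= x <= 1.
  split; first by apply: Rmult_le_pos; [exact: pos_INR | apply/Rlt_le/Rinv_0_lt_compat].
  rewrite -(Rdiv_1_r 1); apply: Rdiv_le_div_cross; try lra.
  by rewrite !Rmult_1_r; apply/le_INR/leP.
have a_le : INR a <= INR c * (1 - x) ^ N.
  apply: (Rmult_le_reg_r (INR D ^ N)); first exact: pow_lt.
  have := le_INR _ _ (elimT leP decay); rewrite !INR_muln !INR_expn INR_subn //.
  have -> : INR D - INR b = (1 - x) * INR D by rewrite /x; field; lra.
  by rewrite Rpow_mult_distr -Rmult_assoc.
apply: (@Rle_trans _ ((1 - x) ^ N)).
  rewrite -(Rdiv_1_r ((1 - x) ^ N)); apply: Rdiv_le_div_cross; try lra.
  by apply/lt_0_INR/ltP.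
have -> : - (INR N * INR b / INR D) = INR N * - x by rewrite /x /Rdiv; ring.
rewrite -exp_mulINR; apply: pow_incr; have := exp_ineq1_le (- x); lra.
Qed.

Lemma window_exponent_ge m l k j : (2 <= m)%N -> (0 < k)%N -> (4 * k < l)%N ->
  INR l * INR j / (9 * INR k * (2 * INR m - 1) ^ k) <=
  INR (l.-1 %/ k.+1) * INR (j * (m * 2 - 2) ^ 2) / INR ((m * 2).-1 ^ k.+2).
Proof.
move=> m_ge2 k_gt0 k_l.
have -> : 2 * INR m - 1 = INR (m * 2).-1.
  by rewrite -subn1 INR_subn ?muln_gt0 ?(leq_trans _ m_ge2) // INR_muln /=; ring.
have -> : 9 * INR k * INR (m * 2).-1 ^ k = INR (9 * k * (m * 2).-1 ^ k).
  by rewrite !INR_muln INR_expn [INR 9]INR_IZR_INZ.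
rewrite -2!INR_muln; apply: Rdiv_le_div_cross.
- by apply/lt_0_INR/ltP; rewrite !muln_gt0 expn_gt0 k_gt0; lia.
- by apply/lt_0_INR/ltP; rewrite expn_gt0; lia.
- rewrite -!INR_muln; apply/le_INR/leP; rewrite [X in (_ <= X)%N]mulnC.
  by apply: leq_window_exponent => //; lia.
Qed.

Lemma card_avoiding_words_le (S : finType) l (ws : seq (seq (letter S))) :
  (#|avoiding_words l ws| <= #|cyc_words S l|)%N.
Proof. by apply/subset_leq_card/subsetP => t; rewrite !inE => /andP []. Qed.

Lemma prob_avoid_le1 (S : finType) l (ws : seq (seq (letter S))) : prob_avoid l ws <= 1.
Proof.
rewrite /prob_avoid; have [-> | c_gt0] := posnP #|cyc_words S l|.
  by rewrite INR_0 Rdiv_0_r; lra.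
rewrite -(Rdiv_1_r 1); apply: Rdiv_le_div_cross; try lra; first by apply/lt_0_INR/ltP.
by rewrite !Rmult_1_r; apply/le_INR/leP/card_avoiding_words_le.
Qed.

Lemma prob_avoid_le_exp (S : finType) l k (ws : seq (seq (letter S))) :
  (0 < #|S|)%N -> (0 < k)%N -> (k.+3 <= l)%N -> uniq ws ->
  all (fun u => reduced u && (size u == k)) ws ->
  prob_avoid l ws <=
  exp (- (INR (l.-1 %/ k.+1) * INR (size ws * (#|letter S| - 2) ^ 2)
          / INR (#|letter S|.-1 ^ k.+2))).
Proof.
move=> S_gt0 k_gt0 k_l ws_uniq ws_ok; have /card_gt0P [s0 _] := S_gt0.
apply: ratio_le_exp.
- by rewrite expn_gt0 card_letter; apply/orP; left; lia.
- by rewrite divn_gt0 //; lia.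
- exact: card_avoiding_words_le.
- apply: leq_trans (card_avoiding_windows_le (s0, false) k_gt0 ws_uniq ws_ok k_l (leqnn _)).
  by rewrite leq_mul2r subset_leq_card ?orbT // avoiding_words_sub_windows.
Qed.

Theorem lemma7p3 (S : finType) (l k : nat) (ws : seq (seq (letter S))) :
  (2 <= #|S|)%N -> (4 <= l)%N -> (4 * k < l)%N ->
  uniq ws -> all (fun u => reduced u && (size u == k)) ws ->
  prob_avoid l ws <=
   exp (2 / Rpower (2 * INR #|S| - 1) (INR l / 2 - 1)
        - INR l * INR (size ws) / (9 * INR k * (2 * INR #|S| - 1) ^ k)).
Proof.
move=> S_ge2 l_ge4 k_l ws_uniq ws_ok.
set slack := 2 / Rpower _ _.
have slack_ge0 : 0 <= slack by apply/Rlt_le/Rdiv_lt_0_compat; [lra | apply: exp_pos].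
have [k0 | k_gt0] := posnP k.
  (* Rocq's x / 0 = 0 makes the second term vanish when k = 0. *)
  rewrite k0 INR_0 Rmult_0_r Rmult_0_l Rdiv_0_r Rminus_0_r.
  by apply: Rle_trans (prob_avoid_le1 _ _) _; have := exp_ineq1_le slack; lra.
have S_gt0 : (0 < #|S|)%N by lia.
apply: Rle_trans (prob_avoid_le_exp S_gt0 k_gt0 _ ws_uniq ws_ok) _; first lia.
apply: exp_le_exp; rewrite card_letter.
by have := window_exponent_ge (size ws) S_ge2 k_gt0 k_l; lra.
Qed.
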